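(* Let $(a_{ij})_{i,j=1}^s$, $(b_i)_{i=1}^s$ be the coefficients of a Runge–Kutta scheme with all $b_i\neq0$ which satisfies the classical order conditions up to order five and the simplifying assumptions $B(2)$, $C(2)$, $D(2)$. Then it also satisfies all the additional order conditions of order five: $$\sum_{k,l}\frac{a_{lk}c_kd_kd_l}{b_k}=\tfrac1{40},\ \sum_k\frac{c_k^2d_k^2}{b_k}=\tfrac1{30},\ \sum_l\frac{c_ld_l^3}{b_l^2}=\tfrac1{20},\ \sum_{k,l}\frac{a_{kl}d_k^2c_l}{b_k}=\tfrac1{60},\ \sum_m\frac{d_m^4}{b_m^3}=\tfrac15,$$ $$\sum_{i,j,k}b_ia_{ik}a_{ij}c_jc_k=\tfrac1{20},\ \sum_{j,k,l}a_{lk}a_{kj}c_jd_l=\tfrac1{120},\ \sum_{k,l}\frac{a_{lk}d_kc_ld_l}{b_k}=\tfrac7{120},\ \sum_{i,j,k}\frac{b_ib_j}{b_k}a_{jk}a_{ik}c_ic_j=\tfrac2{15},$$ $$\sum_{i,k}\frac{b_i}{b_k}a_{ik}c_ic_kd_k=\tfrac7{120},\ \sum_{i,l}\frac{b_i}{b_l^2}a_{il}c_id_l^2=\tfrac3{20},\ \sum_{k,l,m}\frac{a_{mk}a_{lk}d_ld_m}{b_k}=\tfrac1{20},\ \sum_{l,m}\frac{a_{ml}d_l^2d_m}{b_l^2}=\tfrac1{10},$$ $$\sum_{k,l,m}\frac{a_{ml}a_{lk}d_kd_m}{b_k}=\tfrac1{30},\ \sum_{i,k,l}\frac{b_i}{b_k}a_{lk}a_{ik}c_id_l=\tfrac3{40},\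 \sum_{i,k,l}\frac{b_i}{b_k}a_{ik}a_{il}d_kc_l=\tfrac3{40},$$ $$\sum_{i,l,m}\frac{b_i}{b_lb_m}a_{im}a_{il}d_ld_m=\tfrac2{15},\ \sum_{i,k}\frac{b_i}{b_k}a_{ik}c_i^2d_k=\tfrac3{20},\ \sum_{l,m}\frac{a_{lm}d_l^2d_m}{b_lb_m}=\tfrac1{15}.$$
   Context: All sums run from $1$ to $s$; $c_i=\sum_ja_{ij}$, $d_j=\sum_ib_ia_{ij}$. Simplifying assumptions: $B(p)$: $\sum_i b_ic_i^{q-1}=\frac1q$ for $q=1,\dots,p$; $C(\eta)$: $\sum_j a_{ij}c_j^{q-1}=\frac{c_i^q}{q}$ for all $i$ and $q=1,\dots,\eta$; $D(\zeta)$: $\sum_i b_ic_i^{q-1}a_{ij}=\frac{b_j}{q}(1-c_j^q)$ for all $j$ and $q=1,\dots,\zeta$. ''Classical order conditions up to order five'' are the standard Butcher rooted-tree conditions for an ODE $y'=f(y)$ up to order five. The additional conditions are those required (Bonnans–Laurent-Varin) for the discretization of an optimal control problem, with state scheme $(a_{ij},b_i)$ and adjoint scheme $\hat b_i=b_i$, $\hat a_{ij}=b_j-\frac{b_j}{b_i}a_{ji}$, to be of order five. *)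

From HB Require Import structures.
From mathcomp Require Import all_boot all_order all_algebra.
Set Implicit Arguments. Unset Strict Implicit. Unset Printing Implicit Defensive.
Import Order.TTheory GRing.Theory Num.Theory.
Local Open Scope ring_scope.

Section RK.
Variables (R : realFieldType) (s : nat).
Variables (a : 'I_s -> 'I_s -> R) (b : 'I_s -> R).

Definition rk_c (i : 'I_s) : R := \sum_(j < s) a i j.
Definition rk_d (j : 'I_s) : R := \sum_(i < s) b i * a i j.

Local Notation c := rk_c.
Local Notation d := rk_d.

Definition rk_B (p : nat) : Prop :=
  forall q : nat, (1 <= q <= p)%N ->
    \sum_(i < s) b i * c i ^+ q.-1 = q%:R^-1.

Definition rk_C (eta : nat) : Prop :=
  forall q : nat, (1 <= q <= eta)%N -> forall i : 'I_s,
    \sum_(j < s) a i j * c j ^+ q.-1 = c i ^+ q / q%:R.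

Definition rk_D (zeta : nat) : Prop :=
  forall q : nat, (1 <= q <= zeta)%N -> forall j : 'I_s,
    \sum_(i < s) b i * c i ^+ q.-1 * a i j = b j / q%:R * (1 - c j ^+ q).

(* Classical (Butcher rooted-tree) order conditions up to order five:
   all 17 rooted trees with at most 5 vertices. *)
Definition rk_classical_order5 : Prop :=
  (\sum_(i < s) b i = 1 /\
      \sum_(i < s) b i * c i = 1 / 2 /\
      \sum_(i < s) b i * c i ^+ 2 = 1 / 3 /\
      \sum_(i < s) \sum_(j < s) b i * a i j * c j = 1 / 6  /\
  (\sum_(i < s) b i * c i ^+ 3 = 1 / 4 /\
      \sum_(i < s) \sum_(j < s) b i * c i * a i j * c j = 1 / 8 /\
      \sum_(i < s) \sum_(j < s) b i * a i j * c j ^+ 2 = 1 / 12 /\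
      \sum_(i < s) \sum_(j < s) \sum_(k < s) b i * a i j * a j k * c k = 1 / 24  /\
  (\sum_(i < s) b i * c i ^+ 4 = 1 / 5 /\
      \sum_(i < s) \sum_(j < s) b i * c i ^+ 2 * a i j * c j = 1 / 10 /\
      \sum_(i < s) \sum_(j < s) b i * c i * a i j * c j ^+ 2 = 1 / 15 /\
      \sum_(i < s) \sum_(j < s) \sum_(k < s) b i * c i * a i j * a j k * c k = 1 / 30 /\
      \sum_(i < s) b i * (\sum_(j < s) a i j * c j) ^+ 2 = 1 / 20 /\
      \sum_(i < s) \sum_(j < s) b i * a i j * c j ^+ 3 = 1 / 20 /\
      \sum_(i < s) \sum_(j < s) \sum_(k < s) b i * a i j * c j * a j k * c k = 1 / 40 /\
      \sum_(i < s) \sum_(j < s) \sum_(k < s) b i * a i j * a j k * c k ^+ 2 = 1 / 60  /\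
      \sum_(i < s) \sum_(j < s) \sum_(k < s) \sum_(l < s)
          b i * a i j * a j k * a k l * c l = 1 / 120))).

(* The additional (Bonnans--Laurent-Varin) order conditions of order five
   for the optimal-control discretization. *)
Definition rk_additional_order5 : Prop :=
  (\sum_(k < s) \sum_(l < s) a l k * c k * d k * d l / b k = 1 / 40 /\
      \sum_(k < s) c k ^+ 2 * d k ^+ 2 / b k = 1 / 30 /\
      \sum_(l < s) c l * d l ^+ 3 / b l ^+ 2 = 1 / 20 /\
      \sum_(k < s) \sum_(l < s) a k l * d k ^+ 2 * c l / b k = 1 / 60 /\
      \sum_(m < s) d m ^+ 4 / b m ^+ 3 = 1 / 5 /\
      \sum_(i < s) \sum_(j < s) \sum_(k < s) b i * a i k * a i j * c j * c k = 1 / 20 /\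
      \sum_(j < s) \sum_(k < s) \sum_(l < s) a l k * a k j * c j * d l = 1 / 120 /\
      \sum_(k < s) \sum_(l < s) a l k * d k * c l * d l / b k = 7 / 120  /\
  (\sum_(i < s) \sum_(j < s) \sum_(k < s)
          b i * b j / b k * a j k * a i k * c i * c j = 2 / 15 /\
      \sum_(i < s) \sum_(k < s) b i / b k * a i k * c i * c k * d k = 7 / 120 /\
      \sum_(i < s) \sum_(l < s) b i / b l ^+ 2 * a i l * c i * d l ^+ 2 = 3 / 20 /\
      \sum_(k < s) \sum_(l < s) \sum_(m < s) a m k * a l k * d l * d m / b k = 1 / 20 /\
      \sum_(l < s) \sum_(m < s) a m l * d l ^+ 2 * d m / b l ^+ 2 = 1 / 10 /\
      \sum_(k < s) \sum_(l < s) \sum_(m < s) a m l * a l k * d k * d m / b k = 1 / 30 /\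
      \sum_(i < s) \sum_(k < s) \sum_(l < s) b i / b k * a l k * a i k * c i * d l = 3 / 40 /\
      \sum_(i < s) \sum_(k < s) \sum_(l < s) b i / b k * a i k * a i l * d k * c l = 3 / 40  /\
  (\sum_(i < s) \sum_(l < s) \sum_(m < s)
          b i / (b l * b m) * a i m * a i l * d l * d m = 2 / 15 /\
      \sum_(i < s) \sum_(k < s) b i / b k * a i k * c i ^+ 2 * d k = 3 / 20  /\
      \sum_(l < s) \sum_(m < s) a l m * d l ^+ 2 * d m / (b l * b m) = 1 / 15))).

End RK.

(* D(1) gives d_k = b_k (1 - c_k), so the adjoint weights
   d_k / b_k are the polynomial 1 - c_k.  Together with C(2) and D(2) this lets
   every inner sum over a stage index of the additional conditions be evaluated
   in closed form as a polynomial in the remaining nodes: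
     sum_j a_ij c_j          = c_i^2 / 2                           (C(2))
     sum_i b_i c_i a_ik      = b_k (1 - c_k^2) / 2                 (D(2))
     sum_l d_l a_lk          = b_k (1 - c_k)^2 / 2                 (D(1), D(2))
     sum_k a_lk d_k / b_k    = c_l - c_l^2 / 2                     (C(1), C(2)).
   After at most two such contractions each condition becomes a single sum
   sum_k b_k p(c_k) with p of degree at most four, and the bushy-tree
   conditions sum_k b_k c_k^q = 1/(q+1), q <= 4, contained in the classical
   order conditions, evaluate it as the integral of p over [0, 1]. *)
From HB Require Import structures.
From mathcomp Require Import all_boot all_order all_algebra.
From mathcomp Require Import ring.
Set Implicit Arguments. Unset Strict Implicit. Unset Printing Implicit Defensive.
Import Order.TTheory GRing.Theory Num.Theory.
Local Open Scope ring_scope.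

Lemma sum_factor (R : pzSemiRingType) (I : finType) (F G : I -> R) (x y : R) :
  \sum_(l : I) G l = y -> (forall l, F l = x * G l) -> \sum_(l : I) F l = x * y.
Proof. by move=> <- HF; rewrite mulr_sumr; apply: eq_bigr => l _. Qed.

Section QuarticQuadrature.
Variables (R : numFieldType) (s : nat) (w x : 'I_s -> R).

Hypothesis exact_monomials :
  forall q : nat, (q <= 4)%N -> \sum_(k < s) w k * x k ^+ q = q.+1%:R^-1.

Lemma quartic_quadrature (F : 'I_s -> R) (p0 p1 p2 p3 p4 r : R) :
  (forall k, F k = w k * (p0 + p1 * x k + p2 * x k ^+ 2 + p3 * x k ^+ 3
                           + p4 * x k ^+ 4)) ->
  r = p0 + p1 / 2 + p2 / 3 + p3 / 4 + p4 / 5 ->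
  \sum_(k < s) F k = r.
Proof.
move=> HF ->; rewrite (eq_bigr _ (fun k _ => HF k)).
transitivity (p0 * \sum_(k < s) w k * x k ^+ 0 + p1 * \sum_(k < s) w k * x k ^+ 1
  + p2 * \sum_(k < s) w k * x k ^+ 2 + p3 * \sum_(k < s) w k * x k ^+ 3
  + p4 * \sum_(k < s) w k * x k ^+ 4).
  by rewrite !mulr_sumr -!big_split; apply: eq_bigr => k _ /=; ring.
by rewrite !exact_monomials //; field.
Qed.

End QuarticQuadrature.

Lemma classical_quadrature (R : realFieldType) (s : nat)
    (a : 'I_s -> 'I_s -> R) (b : 'I_s -> R) :
  rk_classical_order5 a b ->
  forall q : nat, (q <= 4)%N -> \sum_(k < s) b k * rk_c a k ^+ q = q.+1%:R^-1.
Proof.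
move=> [m0 [m1 [m2 [_ [m3 [_ [_ [_ [m4 _]]]]]]]]].
case=> [|[|[|[|[|//]]]]] _.
- by under eq_bigr => k _ do rewrite expr0 mulr1; rewrite m0 invr1.
- by under eq_bigr => k _ do rewrite expr1; rewrite m1 div1r.
- by rewrite m2 div1r.
- by rewrite m3 div1r.
- by rewrite m4 div1r.
Qed.

Section AdditionalConditions.
Variables (R : realFieldType) (s : nat) (a : 'I_s -> 'I_s -> R) (b : 'I_s -> R).
Local Notation c := (rk_c a).
Local Notation d := (rk_d a b).

Hypothesis b_neq0 : forall k, b k != 0.
Hypothesis quadrature :
  forall q : nat, (q <= 4)%N -> \sum_(k < s) b k * c k ^+ q = q.+1%:R^-1.
Hypothesis C2 : rk_C a 2.
Hypothesis D2 : rk_D a b 2.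

Lemma d_eq k : d k = b k * (1 - c k).
Proof.
have D1 := D2 (q := 1) erefl k; rewrite expr1 divr1 in D1.
by rewrite -D1; apply: eq_bigr => i _; rewrite expr0 mulr1.
Qed.

Lemma sum_a_c i : \sum_(j < s) a i j * c j = c i ^+ 2 / 2.
Proof. by rewrite -(C2 (q := 2) erefl i); apply: eq_bigr => j _; rewrite expr1. Qed.

Lemma sum_bc_a k : \sum_(i < s) b i * c i * a i k = b k / 2 * (1 - c k ^+ 2).
Proof. by rewrite -(D2 (q := 2) erefl k); apply: eq_bigr => i _; rewrite expr1. Qed.

Lemma sum_d_a k : \sum_(l < s) d l * a l k = b k * (1 - c k) ^+ 2 / 2.
Proof.
transitivity (\sum_(l < s) b l * a l k - \sum_(l < s) b l * c l * a l k).
  by rewrite -sumrB; apply: eq_bigr => l _; rewrite d_eq; ring.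
by rewrite sum_bc_a -/(rk_d a b k) d_eq; field.
Qed.

Lemma sum_a_one_minus_c l : \sum_(k < s) a l k * (1 - c k) = c l - c l ^+ 2 / 2.
Proof.
transitivity (\sum_(k < s) a l k - \sum_(k < s) a l k * c k).
  by rewrite -sumrB; apply: eq_bigr => k _; ring.
by rewrite sum_a_c.
Qed.

Local Ltac rk_field := rewrite ?d_eq; field; by rewrite ?b_neq0.

Local Notation quartic p0 p1 p2 p3 p4 :=
  (quartic_quadrature quadrature (p0 := p0) (p1 := p1) (p2 := p2) (p3 := p3)
     (p4 := p4)).

Lemma additional_1 :
  \sum_(k < s) \sum_(l < s) a l k * c k * d k * d l / b k = 1 / 40.
Proof.
have inner k : \sum_(l < s) a l k * c k * d k * d l / b k
               = c k * d k / b k * (b k * (1 - c k) ^+ 2 / 2).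
  by apply: sum_factor (sum_d_a k) _ => l; rk_field.
under eq_bigr => k _ do rewrite inner.
by apply: (quartic 0 (1/2) (-3/2) (3/2) (-1/2)) => [k|]; rk_field.
Qed.

Lemma additional_2 : \sum_(k < s) c k ^+ 2 * d k ^+ 2 / b k = 1 / 30.
Proof. by apply: (quartic 0 0 1 (-2) 1) => [k|]; rk_field. Qed.

Lemma additional_3 : \sum_(l < s) c l * d l ^+ 3 / b l ^+ 2 = 1 / 20.
Proof. by apply: (quartic 0 1 (-3) 3 (-1)) => [k|]; rk_field. Qed.

Lemma additional_4 :
  \sum_(k < s) \sum_(l < s) a k l * d k ^+ 2 * c l / b k = 1 / 60.
Proof.
have inner k : \sum_(l < s) a k l * d k ^+ 2 * c l / b k
               = d k ^+ 2 / b k * (c k ^+ 2 / 2).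
  by apply: sum_factor (sum_a_c k) _ => l; rk_field.
under eq_bigr => k _ do rewrite inner.
by apply: (quartic 0 0 (1/2) (-1) (1/2)) => [k|]; rk_field.
Qed.

Lemma additional_5 : \sum_(m < s) d m ^+ 4 / b m ^+ 3 = 1 / 5.
Proof. by apply: (quartic 1 (-4) 6 (-4) 1) => [k|]; rk_field. Qed.

Lemma additional_6 :
  \sum_(i < s) \sum_(j < s) \sum_(k < s) b i * a i k * a i j * c j * c k = 1 / 20.
Proof.
have inner_k i j : \sum_(k < s) b i * a i k * a i j * c j * c k
                   = b i * a i j * c j * (c i ^+ 2 / 2).
  by apply: sum_factor (sum_a_c i) _ => k; rk_field.
under eq_bigr => i _ do under eq_bigr => j _ do rewrite inner_k.
have inner_j i : \sum_(j < s) b i * a i j * c j * (c i ^+ 2 / 2)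
                 = b i * (c i ^+ 2 / 2) * (c i ^+ 2 / 2).
  by apply: sum_factor (sum_a_c i) _ => j; rk_field.
under eq_bigr => i _ do rewrite inner_j.
by apply: (quartic 0 0 0 0 (1/4)) => [k|]; rk_field.
Qed.

Lemma additional_7 :
  \sum_(j < s) \sum_(k < s) \sum_(l < s) a l k * a k j * c j * d l = 1 / 120.
Proof.
have inner_l j k : \sum_(l < s) a l k * a k j * c j * d l
                   = a k j * c j * (b k * (1 - c k) ^+ 2 / 2).
  by apply: sum_factor (sum_d_a k) _ => l; rk_field.
under eq_bigr => j _ do under eq_bigr => k _ do rewrite inner_l.
rewrite exchange_big /=.
have inner_j k : \sum_(j < s) a k j * c j * (b k * (1 - c k) ^+ 2 / 2)
                 = b k * (1 - c k) ^+ 2 / 2 * (c k ^+ 2 / 2).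
  by apply: sum_factor (sum_a_c k) _ => j; rk_field.
under eq_bigr => k _ do rewrite inner_j.
by apply: (quartic 0 0 (1/4) (-1/2) (1/4)) => [k|]; rk_field.
Qed.

Lemma additional_8 :
  \sum_(k < s) \sum_(l < s) a l k * d k * c l * d l / b k = 7 / 120.
Proof.
rewrite exchange_big /=.
have inner l : \sum_(k < s) a l k * d k * c l * d l / b k
               = c l * d l * (c l - c l ^+ 2 / 2).
  by apply: sum_factor (sum_a_one_minus_c l) _ => k; rk_field.
under eq_bigr => l _ do rewrite inner.
by apply: (quartic 0 0 1 (-3/2) (1/2)) => [k|]; rk_field.
Qed.

Lemma additional_9 :
  \sum_(i < s) \sum_(j < s) \sum_(k < s)
    b i * b j / b k * a j k * a i k * c i * c j = 2 / 15.
Proof.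
under eq_bigr => i _ do rewrite exchange_big.
rewrite exchange_big /=.
have inner_j k i : \sum_(j < s) b i * b j / b k * a j k * a i k * c i * c j
                   = b i * a i k * c i / b k * (b k / 2 * (1 - c k ^+ 2)).
  by apply: sum_factor (sum_bc_a k) _ => j; rk_field.
under eq_bigr => k _ do under eq_bigr => i _ do rewrite inner_j.
have inner_i k : \sum_(i < s) b i * a i k * c i / b k * (b k / 2 * (1 - c k ^+ 2))
                 = b k / 2 * (1 - c k ^+ 2) / b k * (b k / 2 * (1 - c k ^+ 2)).
  by apply: sum_factor (sum_bc_a k) _ => i; rk_field.
under eq_bigr => k _ do rewrite inner_i.
by apply: (quartic (1/4) 0 (-1/2) 0 (1/4)) => [k|]; rk_field.
Qed.

Lemma additional_10 :
  \sum_(i < s) \sum_(k < s) b i / b k * a i k * c i * c k * d k = 7 / 120.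
Proof.
rewrite exchange_big /=.
have inner k : \sum_(i < s) b i / b k * a i k * c i * c k * d k
               = c k * d k / b k * (b k / 2 * (1 - c k ^+ 2)).
  by apply: sum_factor (sum_bc_a k) _ => i; rk_field.
under eq_bigr => k _ do rewrite inner.
by apply: (quartic 0 (1/2) (-1/2) (-1/2) (1/2)) => [k|]; rk_field.
Qed.

Lemma additional_11 :
  \sum_(i < s) \sum_(l < s) b i / b l ^+ 2 * a i l * c i * d l ^+ 2 = 3 / 20.
Proof.
rewrite exchange_big /=.
have inner l : \sum_(i < s) b i / b l ^+ 2 * a i l * c i * d l ^+ 2
               = d l ^+ 2 / b l ^+ 2 * (b l / 2 * (1 - c l ^+ 2)).
  by apply: sum_factor (sum_bc_a l) _ => i; rk_field.
under eq_bigr => l _ do rewrite inner.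
by apply: (quartic (1/2) (-1) 0 1 (-1/2)) => [k|]; rk_field.
Qed.

Lemma additional_12 :
  \sum_(k < s) \sum_(l < s) \sum_(m < s) a m k * a l k * d l * d m / b k = 1 / 20.
Proof.
have inner_m k l : \sum_(m < s) a m k * a l k * d l * d m / b k
                   = a l k * d l / b k * (b k * (1 - c k) ^+ 2 / 2).
  by apply: sum_factor (sum_d_a k) _ => m; rk_field.
under eq_bigr => k _ do under eq_bigr => l _ do rewrite inner_m.
have inner_l k : \sum_(l < s) a l k * d l / b k * (b k * (1 - c k) ^+ 2 / 2)
                 = b k * (1 - c k) ^+ 2 / 2 / b k * (b k * (1 - c k) ^+ 2 / 2).
  by apply: sum_factor (sum_d_a k) _ => l; rk_field.
under eq_bigr => k _ do rewrite inner_l.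
by apply: (quartic (1/4) (-1) (3/2) (-1) (1/4)) => [k|]; rk_field.
Qed.

Lemma additional_13 :
  \sum_(l < s) \sum_(m < s) a m l * d l ^+ 2 * d m / b l ^+ 2 = 1 / 10.
Proof.
have inner l : \sum_(m < s) a m l * d l ^+ 2 * d m / b l ^+ 2
               = d l ^+ 2 / b l ^+ 2 * (b l * (1 - c l) ^+ 2 / 2).
  by apply: sum_factor (sum_d_a l) _ => m; rk_field.
under eq_bigr => l _ do rewrite inner.
by apply: (quartic (1/2) (-2) 3 (-2) (1/2)) => [k|]; rk_field.
Qed.

Lemma additional_14 :
  \sum_(k < s) \sum_(l < s) \sum_(m < s) a m l * a l k * d k * d m / b k = 1 / 30.
Proof.
have inner_m k l : \sum_(m < s) a m l * a l k * d k * d m / b k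
                   = a l k * d k / b k * (b l * (1 - c l) ^+ 2 / 2).
  by apply: sum_factor (sum_d_a l) _ => m; rk_field.
under eq_bigr => k _ do under eq_bigr => l _ do rewrite inner_m.
rewrite exchange_big /=.
have inner_k l : \sum_(k < s) a l k * d k / b k * (b l * (1 - c l) ^+ 2 / 2)
                 = b l * (1 - c l) ^+ 2 / 2 * (c l - c l ^+ 2 / 2).
  by apply: sum_factor (sum_a_one_minus_c l) _ => k; rk_field.
under eq_bigr => l _ do rewrite inner_k.
by apply: (quartic 0 (1/2) (-5/4) 1 (-1/4)) => [k|]; rk_field.
Qed.

Lemma additional_15 :
  \sum_(i < s) \sum_(k < s) \sum_(l < s) b i / b k * a l k * a i k * c i * d l
  = 3 / 40.
Proof.
have inner_l i k : \sum_(l < s) b i / b k * a l k * a i k * c i * d l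
                   = b i / b k * a i k * c i * (b k * (1 - c k) ^+ 2 / 2).
  by apply: sum_factor (sum_d_a k) _ => l; rk_field.
under eq_bigr => i _ do under eq_bigr => k _ do rewrite inner_l.
rewrite exchange_big /=.
have inner_i k : \sum_(i < s) b i / b k * a i k * c i * (b k * (1 - c k) ^+ 2 / 2)
                 = b k * (1 - c k) ^+ 2 / 2 / b k * (b k / 2 * (1 - c k ^+ 2)).
  by apply: sum_factor (sum_bc_a k) _ => i; rk_field.
under eq_bigr => k _ do rewrite inner_i.
by apply: (quartic (1/4) (-1/2) 0 (1/2) (-1/4)) => [k|]; rk_field.
Qed.

Lemma additional_16 :
  \sum_(i < s) \sum_(k < s) \sum_(l < s) b i / b k * a i k * a i l * d k * c l
  = 3 / 40.
Proof.
have inner_l i k : \sum_(l < s) b i / b k * a i k * a i l * d k * c l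
                   = b i / b k * a i k * d k * (c i ^+ 2 / 2).
  by apply: sum_factor (sum_a_c i) _ => l; rk_field.
under eq_bigr => i _ do under eq_bigr => k _ do rewrite inner_l.
have inner_k i : \sum_(k < s) b i / b k * a i k * d k * (c i ^+ 2 / 2)
                 = b i * (c i ^+ 2 / 2) * (c i - c i ^+ 2 / 2).
  by apply: sum_factor (sum_a_one_minus_c i) _ => k; rk_field.
under eq_bigr => i _ do rewrite inner_k.
by apply: (quartic 0 0 0 (1/2) (-1/4)) => [k|]; rk_field.
Qed.

Lemma additional_17 :
  \sum_(i < s) \sum_(l < s) \sum_(m < s)
    b i / (b l * b m) * a i m * a i l * d l * d m = 2 / 15.
Proof.
have inner_m i l : \sum_(m < s) b i / (b l * b m) * a i m * a i l * d l * d m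
                   = b i / b l * a i l * d l * (c i - c i ^+ 2 / 2).
  by apply: sum_factor (sum_a_one_minus_c i) _ => m; rk_field.
under eq_bigr => i _ do under eq_bigr => l _ do rewrite inner_m.
have inner_l i : \sum_(l < s) b i / b l * a i l * d l * (c i - c i ^+ 2 / 2)
                 = b i * (c i - c i ^+ 2 / 2) * (c i - c i ^+ 2 / 2).
  by apply: sum_factor (sum_a_one_minus_c i) _ => l; rk_field.
under eq_bigr => i _ do rewrite inner_l.
by apply: (quartic 0 0 1 (-1) (1/4)) => [k|]; rk_field.
Qed.

Lemma additional_18 :
  \sum_(i < s) \sum_(k < s) b i / b k * a i k * c i ^+ 2 * d k = 3 / 20.
Proof.
have inner i : \sum_(k < s) b i / b k * a i k * c i ^+ 2 * d k
               = b i * c i ^+ 2 * (c i - c i ^+ 2 / 2).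
  by apply: sum_factor (sum_a_one_minus_c i) _ => k; rk_field.
under eq_bigr => i _ do rewrite inner.
by apply: (quartic 0 0 0 1 (-1/2)) => [k|]; rk_field.
Qed.

Lemma additional_19 :
  \sum_(l < s) \sum_(m < s) a l m * d l ^+ 2 * d m / (b l * b m) = 1 / 15.
Proof.
have inner l : \sum_(m < s) a l m * d l ^+ 2 * d m / (b l * b m)
               = d l ^+ 2 / b l * (c l - c l ^+ 2 / 2).
  by apply: sum_factor (sum_a_one_minus_c l) _ => m; rk_field.
under eq_bigr => l _ do rewrite inner.
by apply: (quartic 0 1 (-5/2) 2 (-1/2)) => [k|]; rk_field.
Qed.

Lemma additional_order5 : rk_additional_order5 a b.
Proof.
do !split; [exact: additional_1 | exact: additional_2 | exact: additional_3
  | exact: additional_4 | exact: additional_5 | exact: additional_6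
  | exact: additional_7 | exact: additional_8 | exact: additional_9
  | exact: additional_10 | exact: additional_11 | exact: additional_12
  | exact: additional_13 | exact: additional_14 | exact: additional_15
  | exact: additional_16 | exact: additional_17 | exact: additional_18
  | exact: additional_19].
Qed.

End AdditionalConditions.

(* Theorem 4: B(2), C(2), D(2) and the classical order-five conditions imply
   the additional order-five conditions. *)
Theorem mainTheorem4 (R : realFieldType) (s : nat)
    (a : 'I_s -> 'I_s -> R) (b : 'I_s -> R) :
  (forall i : 'I_s, b i != 0) ->
  rk_classical_order5 a b ->
  rk_B a b 2 -> rk_C a 2 -> rk_D a b 2 ->
  rk_additional_order5 a b.
Proof.
move=> b_neq0 /classical_quadrature quadrature _ C2 D2.
exact: additional_order5.
Qed.
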